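(* Let $(x_k)_{k\ge0}$ be indeterminates, define $a_n=x_n$ if $n=2^k-1$ for some integer $k\ge0$ and $a_n=0$ otherwise, and let $d(n)=\det\left(a_{i+j}\right)_{i,j=0}^{n-1}$ with $d(0)=1$. For $k\ge1$ and $n\ge0$ let $\lambda_k(n)$ denote the degree of $d(n)$ in the variable $x_{2^k-1}$. Then for every $k\ge1$: $\lambda_k(n)=0$ for $0\le n\le 2^{k-1}$; $\lambda_k(2^{k-1}+i)=2i$ for $0\le i\le 2^{k-1}$; $\lambda_k(2^k+i)=2^k-2i$ for $0\le i\le 2^{k-1}$; $\lambda_k(n)=0$ for $2^k+2^{k-1}\le n\le 2^{k+1}$; and for $n>2^{k+1}$, $\lambda_k(n)=\lambda_k(n \bmod 2^{k+1})$.
   Context: The paper writes $d(n)=(-1)^{\sum_{i\ge0}\binom{\lambda_i(n)}{2}}\prod_{i\ge0}x_{2^i-1}^{\lambda_i(n)}$, so $\lambda_i(n)$ is the exponent of $x_{2^i-1}$ in $d(n)$. *)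

From mathcomp Require Import all_boot all_algebra.
From mathcomp Require Import mpoly.
Set Implicit Arguments. Unset Strict Implicit. Unset Printing Implicit Defensive.
Import GRing.Theory.
Local Open Scope ring_scope.

Definition is_pow2m1 (t : nat) : bool := [exists k : 'I_t.+2, t.+1 == (2 ^ k)%N].

(* d(n) lives in Z[x_0, ..., x_{2n}]; only x_0..x_{2n-2} actually occur. *)
Definition hank_entry (n t : nat) : {mpoly int[n.*2.+1]} :=
  if is_pow2m1 t then 'X_(inord t) else 0.

Definition hankmx (n : nat) : 'M[{mpoly int[n.*2.+1]}]_n :=
  \matrix_(i < n, j < n) hank_entry n (i + j)%N.

Definition d (n : nat) : {mpoly int[n.*2.+1]} := \det (hankmx n).

(* degree of a multivariate polynomial p in the variable x_j (0 if x_j is not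
   among the variables of the ring, or p = 0) *)
Definition degvar (N : nat) (p : {mpoly int[N.+1]}) (j : nat) : nat :=
  if (j <= N)%N then \max_(m <- msupp p) m (inord j) else 0%N.

Definition lambda (k n : nat) : nat := degvar (d n) (2 ^ k).-1.

(* Only the antidiagonals i + j = 2^r - 1 of the Hankel matrix are nonzero.
   Let P be the least power of two with n <= P.  A row and the column matched
   with it sum to at most 2n - 2 < 2P - 1, so a row or column beyond P/2 lies
   on the antidiagonal P - 1; by injectivity every row i >= P - n is then
   matched with P - 1 - i, and the rows below P - n are matched among
   themselves.  Hence exactly one permutation contributes to the determinant
   and d(n) is a signed monomial.  Its exponent of x_(2^k-1) counts the rows
   matched along the antidiagonal 2^k - 1, so
   lambda_k(n) = lambda_k(P - n) + (2n - P) [P = 2^k],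
   a recursion solved by a tent function of period 2^(k+1). *)

From mathcomp Require Import all_boot all_algebra all_fingroup.
From mathcomp Require Import mpoly.
From mathcomp Require Import zify.
Set Implicit Arguments. Unset Strict Implicit. Unset Printing Implicit Defensive.
Import GRing.Theory.

Lemma is_pow2m1P t : reflect (exists r, t.+1 = 2 ^ r) (is_pow2m1 t).
Proof.
apply: (iffP existsP) => [[r /eqP ->]|[r tE]]; first by exists r.
have lt_r : r < t.+2 by have := ltn_expl r (isT : 1 < 2); rewrite -tE; lia.
by exists (Ordinal lt_r); apply/eqP.
Qed.

Lemma pow2m1_succ_eq t m :
  is_pow2m1 t -> 2 ^ m < 2 * t.+1 < 4 * 2 ^ m -> t.+1 = 2 ^ m.
Proof.
move=> /is_pow2m1P [r ->]; rewrite -!expnS.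
have -> : 4 * 2 ^ m = 2 ^ m.+2 by rewrite !expnS mulnA.
by rewrite !ltn_exp2l // => /andP[? ?]; have -> : r = m by lia.
Qed.

Definition pow2ceil n := 2 ^ up_log 2 n.

Lemma pow2ceil_bounds n : 0 < n -> n <= pow2ceil n < 2 * n.
Proof.
case: n => [//|[|n]] _; first by rewrite /pow2ceil up_log1.
have := up_log_gtn (isT : 1 < 2) (isT : 1 < n.+2).
rewrite /pow2ceil up_logP // -{2}(prednK (up_log_gt0 2 n.+2)) expnS; lia.
Qed.

Fixpoint partner_rec fuel n i :=
  if fuel is fuel'.+1 then
    if n == 0 then 0
    else if pow2ceil n - n <= i then (pow2ceil n).-1 - i
    else partner_rec fuel' (pow2ceil n - n) i
  else 0.

Definition partner n i := partner_rec n n i.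

Lemma partner_rec_fuel fuel fuel' n i :
  n <= fuel -> n <= fuel' -> partner_rec fuel n i = partner_rec fuel' n i.
Proof.
elim: fuel fuel' n => [|fuel IH] [|fuel'] n //= le_n le_n'.
- by case: n le_n {le_n'}.
- by case: n le_n' {le_n}.
case: (posnP n) => [//|n_gt0]; case: ifP => // _.
by apply: IH; have := pow2ceil_bounds n_gt0; lia.
Qed.

Lemma partnerE n i : 0 < n ->
  partner n i = if pow2ceil n - n <= i then (pow2ceil n).-1 - i
                else partner (pow2ceil n - n) i.
Proof.
case: n => // n _; rewrite /partner /=; case: ifP => // _.
by apply: partner_rec_fuel => //; have := @pow2ceil_bounds n.+1; lia.
Qed.

Lemma partner_spec n i : i < n ->
  [/\ partner n i < n, is_pow2m1 (i + partner n i) & partner n (partner n i) = i].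
Proof.
elim/ltn_ind: n i => n IH i lt_in; have n_gt0 : 0 < n by lia.
have := pow2ceil_bounds n_gt0; rewrite !(partnerE _ n_gt0).
set P := pow2ceil n => P_bounds.
have [le_Mi|lt_iM] := leqP (P - n) i.
  split; [lia | | by rewrite ifT; lia].
  by apply/is_pow2m1P; exists (up_log 2 n); rewrite -/(pow2ceil n) -/P; lia.
have [lt_pM pow_p pK] := IH (P - n) ltac:(lia) i lt_iM.
by rewrite ifF; [split => //; lia | lia].
Qed.

Lemma partner_lt n i : i < n -> partner n i < n.
Proof. by case/partner_spec. Qed.

Lemma partner_pow2m1 n i : i < n -> is_pow2m1 (i + partner n i).
Proof. by case/partner_spec. Qed.

Lemma partnerK n i : i < n -> partner n (partner n i) = i.
Proof. by case/partner_spec. Qed.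

Section PartnerUnique.

Variables (n : nat) (g : nat -> nat).
Hypothesis g_lt : forall i, i < n -> g i < n.
Hypothesis g_inj : forall i j, i < n -> j < n -> g i = g j -> i = j.
Hypothesis g_pow2m1 : forall i, i < n -> is_pow2m1 (i + g i).

Lemma matching_top i :
  i < n -> pow2ceil n <= 2 * maxn i (g i) + 1 -> (i + g i).+1 = pow2ceil n.
Proof.
move=> lt_in le_P; apply: pow2m1_succ_eq (g_pow2m1 lt_in) _.
rewrite -/(pow2ceil n); have := g_lt lt_in; have := @pow2ceil_bounds n; lia.
Qed.

Lemma matching_ge i : i < n -> pow2ceil n - n <= g i -> (i + g i).+1 = pow2ceil n.
Proof.
move=> lt_in le_Mg; have := pow2ceil_bounds (leq_ltn_trans (leq0n i) lt_in).
set P := pow2ceil n => P_bounds; have lt_gn := g_lt lt_in.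
have [le_P|lt_P] := leqP P (2 * g i + 1); first by apply: matching_top; lia.
(* Row P.-1 - g i lies in the upper half, so it is matched with g i: it is row i. *)
have lt_jn : P.-1 - g i < n by lia.
have jE : (P.-1 - g i + g (P.-1 - g i)).+1 = P.
  by apply: matching_top => //; rewrite -/P; lia.
have /g_inj : g (P.-1 - g i) = g i by lia.
by move=> /(_ lt_jn lt_in) <-; lia.
Qed.

Lemma matching_lt i : i < n -> i < pow2ceil n - n -> g i < pow2ceil n - n.
Proof.
move=> lt_in lt_iM; rewrite ltnNge; apply/negP => /(matching_ge lt_in).
by have := g_lt lt_in; lia.
Qed.

End PartnerUnique.

Lemma partner_unique n (g : nat -> nat) :
  (forall i, i < n -> g i < n) ->
  (forall i j, i < n -> j < n -> g i = g j -> i = j) ->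
  (forall i, i < n -> is_pow2m1 (i + g i)) ->
  forall i, i < n -> g i = partner n i.
Proof.
elim/ltn_ind: n g => n IH g g_lt g_inj g_pow2m1 i lt_in.
have n_gt0 : 0 < n by lia.
have := pow2ceil_bounds n_gt0; rewrite (partnerE _ n_gt0).
set P := pow2ceil n => P_bounds.
have gE : forall j, j < P - n -> g j = partner (P - n) j.
  apply: IH; first lia.
  - by move=> j lt_j; apply: matching_lt => //; lia.
  - by move=> j j' lt_j lt_j'; apply: g_inj; lia.
  - by move=> j lt_j; apply: g_pow2m1; lia.
have [le_Mg|lt_gM] := leqP (P - n) (g i).
  have sumE : (i + g i).+1 = P := matching_ge g_lt g_inj g_pow2m1 lt_in le_Mg.
  by have lt_gn := g_lt i lt_in; rewrite ifT; lia.
have lt_iM : i < P - n.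
  have lt_jM := partner_lt lt_gM.
  rewrite ltnNge; apply/negP => le_Mi.
  have := gE _ lt_jM; rewrite partnerK // => /g_inj; lia.
by rewrite ifF ?gE //; lia.
Qed.

Section HankelPerm.

Variable n : nat.

Definition partner_ord (i : 'I_n) : 'I_n := Ordinal (partner_lt (ltn_ord i)).

Lemma partner_ord_inj : injective partner_ord.
Proof.
move=> i j /(congr1 val) /= eq_ij; apply/val_inj.
by rewrite /= -(partnerK (ltn_ord i)) -(partnerK (ltn_ord j)) eq_ij.
Qed.

Definition hankel_perm : 'S_n := perm partner_ord_inj.

Lemma hankel_permE (i : 'I_n) : val (hankel_perm i) = partner n i.
Proof. by rewrite permE. Qed.

Lemma hankel_perm_unique (s : 'S_n) :
  (forall i : 'I_n, is_pow2m1 (i + s i)) -> s = hankel_perm.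
Proof.
move=> s_pow2m1; apply/permP => i; apply/val_inj; rewrite hankel_permE.
rewrite -[in LHS](valKd i i).
apply: (partner_unique (g := fun j => val (s (insubd i j)))); last exact: ltn_ord.
- by move=> j _; apply: ltn_ord.
- by move=> j j' lt_jn lt_j'n /val_inj /perm_inj /(congr1 val); rewrite !insubdK.
- by move=> j lt_jn; have := s_pow2m1 (insubd i j); rewrite insubdK.
Qed.

Lemma d_hankel_perm :
  d n = ((-1) ^+ hankel_perm * 'X_[\sum_(i < n) U_(inord (i + partner n i))])%R.
Proof.
rewrite /d /determinant (bigD1 hankel_perm) //= [X in (_ + X)%R]big1 ?addr0 => [|s ne_s].
  congr (_ * _)%R.
  rewrite (big_morph (fun m => 'X_[m] : {mpoly int[n.*2.+1]}) (@mpolyXD _ _) (@mpolyX0 _ _)).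
  apply: eq_bigr => i _.
  by rewrite mxE /hank_entry hankel_permE partner_pow2m1.
have [/forallP/hankel_perm_unique eq_s|] := boolP [forall i : 'I_n, is_pow2m1 (i + s i)].
  by rewrite eq_s eqxx in ne_s.
move=> /forallPn [i not_pow2m1]; rewrite (bigD1 i) //= mxE /hank_entry.
by rewrite (negbTE not_pow2m1) mul0r mulr0.
Qed.

End HankelPerm.

Lemma degvar_sign_mpolyX N (b : bool) (m : 'X_{1..N.+1}) j :
  j <= N -> degvar ((-1) ^+ b * 'X_[m])%R j = m (inord j).
Proof.
move=> le_jN; rewrite /degvar le_jN.
by case: b; rewrite ?(expr1, expr0, mul1r, mulN1r, perm_big _ (msuppN _)) msuppX big_seq1.
Qed.

Definition match_count j n := \sum_(i < n) (i + partner n i == j).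

Lemma lambda_match_count k n : lambda k n = match_count (2 ^ k).-1 n.
Proof.
rewrite /lambda d_hankel_perm /match_count.
have [le_jn|lt_nj] := leqP (2 ^ k).-1 n.*2.
  rewrite degvar_sign_mpolyX // mnm_sumE; apply: eq_bigr => i _.
  rewrite mnm1E -val_eqE /= !inordK //.
  by have := partner_lt (ltn_ord i); have := ltn_ord i; lia.
rewrite /degvar leqNgt lt_nj /= big1 // => i _.
by have := partner_lt (ltn_ord i); have := ltn_ord i; lia.
Qed.

Lemma match_count_rec j n : 0 < n ->
  match_count j n =
    match_count j (pow2ceil n - n) + (2 * n - pow2ceil n) * ((pow2ceil n).-1 == j).
Proof.
move=> n_gt0; have := pow2ceil_bounds n_gt0; set P := pow2ceil n => P_bounds.
rewrite /match_count -!(big_mkord xpredT (fun i => nat_of_bool (i + partner _ i == j))).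
rewrite (big_cat_nat _ (n := P - n)) //=; last lia.
congr (_ + _).
  rewrite big_nat_cond [RHS]big_nat_cond; apply: eq_bigr => i /andP[/andP[_ lt_iM] _].
  by rewrite (partnerE _ n_gt0) -/P ifF //; lia.
have -> : 2 * n - P = n - (P - n) by lia.
rewrite -sum_nat_const_nat big_nat_cond [RHS]big_nat_cond.
apply: eq_bigr => i /andP[/andP[le_Mi lt_in] _].
by rewrite (partnerE _ n_gt0) -/P ifT //; congr (nat_of_bool (_ == _)); lia.
Qed.

(* The truncated [- Q] makes the tent vanish on [0, Q] and [3Q, 4Q] modulo 4Q. *)
Definition tent Q n := let r := n %% (4 * Q) in 2 * (minn r (4 * Q - r) - Q).

Lemma tent_small Q n : n < 4 * Q -> tent Q n = 2 * (minn n (4 * Q - n) - Q).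
Proof. by move=> lt_n; rewrite /tent modn_small. Qed.

Lemma tent_sub Q P n : 0 < Q -> 4 * Q %| P -> n <= P -> tent Q (P - n) = tent Q n.
Proof.
move=> Q_gt0 /eqP dvd_P le_nP; rewrite /tent modnB ?dvd_P //; last lia.
have : n %% (4 * Q) < 4 * Q by rewrite ltn_pmod ?muln_gt0.
lia.
Qed.

Lemma match_count_tent k n : 0 < k -> match_count (2 ^ k).-1 n = tent (2 ^ k.-1) n.
Proof.
move=> k_gt0; set Q := 2 ^ k.-1.
have Q_gt0 : 0 < Q by rewrite expn_gt0.
have pow2kE : 2 ^ k = 2 * Q by rewrite /Q -expnS prednK.
elim/ltn_ind: n => n IH.
have [->|n_gt0] := posnP n; first by rewrite /match_count big_ord0 tent_small; lia.
have P_bounds := pow2ceil_bounds n_gt0.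
rewrite match_count_rec // IH; last lia.
rewrite pow2kE /pow2ceil in P_bounds *; move: (up_log 2 n) P_bounds => m P_bounds.
have [lt_mk|lt_km|eq_mk] := ltngtP m k.
- have le_PQ : 2 ^ m <= Q by rewrite leq_exp2l //; lia.
  have -> : ((2 ^ m).-1 == (2 * Q).-1) = false by apply/eqP; lia.
  by rewrite muln0 addn0 !tent_small; lia.
- have dvd_Q : 4 * Q %| 2 ^ m.
    by rewrite /Q -[4]/(2 ^ 2) -expnD dvdn_exp2l //; lia.
  have := dvdn_leq (expn_gt0 2 m) dvd_Q => le_QP.
  have -> : ((2 ^ m).-1 == (2 * Q).-1) = false by apply/eqP; lia.
  by rewrite muln0 addn0 tent_sub //; case/andP: P_bounds.
- rewrite eq_mk pow2kE in P_bounds *.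
  by rewrite eqxx muln1 !tent_small; lia.
Qed.

Lemma lambda_tent k n : 0 < k -> lambda k n = tent (2 ^ k.-1) n.
Proof. by move=> k_gt0; rewrite lambda_match_count match_count_tent. Qed.

Theorem theorem4p4 (k : nat) (hk : (1 <= k)%N) :
  [/\ (forall n, (n <= 2 ^ k.-1)%N -> lambda k n = 0%N),
      (forall i, (i <= 2 ^ k.-1)%N -> lambda k (2 ^ k.-1 + i) = (2 * i)%N),
      (forall i, (i <= 2 ^ k.-1)%N -> lambda k (2 ^ k + i) = (2 ^ k - 2 * i)%N),
      (forall n, (2 ^ k + 2 ^ k.-1 <= n <= 2 ^ k.+1)%N -> lambda k n = 0%N) &
      (forall n, (2 ^ k.+1 < n)%N -> lambda k n = lambda k (n %% 2 ^ k.+1))].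
Proof.
have pow2kE : 2 ^ k = 2 * 2 ^ k.-1 by rewrite -expnS prednK.
have pow2SkE : 2 ^ k.+1 = 4 * 2 ^ k.-1 by rewrite expnS pow2kE mulnA.
have Q_gt0 : 0 < 2 ^ k.-1 by rewrite expn_gt0.
rewrite pow2SkE pow2kE; split=> [n le_nQ|i le_iQ|i le_iQ|n /andP[le_n le_n']|n _].
- by rewrite lambda_tent // tent_small; lia.
- by rewrite lambda_tent // tent_small; lia.
- by rewrite lambda_tent // tent_small; lia.
- rewrite lambda_tent //; have [lt_n|] := ltnP n (4 * 2 ^ k.-1).
    by rewrite tent_small; lia.
  move=> ge_n; have -> : n = 4 * 2 ^ k.-1 by lia.
  by rewrite /tent modnn /= min0n.
- by rewrite !lambda_tent // /tent modn_mod.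
Qed.
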